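(* Let $\mathcal{F}=\{f_i\}_{i=1}^N$ be a frame for $\mathbb{R}^n$. Then $d(\mathcal{F})$ is the largest integer $k$ such that there exists a $k$-dimensional maximal $\mathcal{F}$-PR subspace.
   Context: A frame for $\mathbb{R}^n$ is a finite spanning sequence. For $\Lambda\subseteq\{1,\dots,N\}$ let $\mathcal{F}_\Lambda=\{f_i\}_{i\in\Lambda}$, $\Lambda^c$ its complement, and $d_\Lambda=\max\{\dim\mathrm{span}(\mathcal{F}_\Lambda),\dim\mathrm{span}(\mathcal{F}_{\Lambda^c})\}$; define $d(\mathcal{F})=\min\{d_\Lambda:\Lambda\subseteq\{1,\dots,N\}\}$. A finite sequence $\{g_i\}$ in a subspace $M$ is a phase-retrievable frame for $M$ if it spans $M$ and $|\langle x,g_i\rangle|=|\langle y,g_i\rangle|$ for all $i$ with $x,y\in M$ implies $x=\pm y$. A subspace $M$ is an $\mathcal{F}$-PR subspace if $\{P_Mf_i\}_{i=1}^N$ is a phase-retrievable frame for $M$, where $P_M$ is the orthogonal projection onto $M$; it is maximal if it is not a proper subspace of another $\mathcal{F}$-PR subspace. *)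

(* Vectors of R^n are row vectors 'rV[R]_n; a subspace M of
   R^n is represented by a square matrix 'M[R]_n through its row space. *)
From HB Require Import structures.
From mathcomp Require Import all_boot all_order all_algebra.
From mathcomp Require Import reals.
Set Implicit Arguments. Unset Strict Implicit. Unset Printing Implicit Defensive.
Import Order.TTheory GRing.Theory Num.Theory.
Local Open Scope ring_scope.

Section Defs.
Variables (R : realType) (n N : nat).

Definition dotv (u v : 'rV[R]_n) : R := (u *m v^T) 0 0.

Definition fspan (f : 'I_N -> 'rV[R]_n) (L : {set 'I_N}) : 'M[R]_n :=
  (\sum_(i in L) <<f i>>)%MS.

Definition is_frame (f : 'I_N -> 'rV[R]_n) : Prop :=
  \rank (fspan f setT) = n.

(* d_Lambda and d(F) = min over all Lambda of d_Lambda
   (every d_Lambda is <= n, so the default n of the iterated min is harmless) *)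
Definition dLam (f : 'I_N -> 'rV[R]_n) (L : {set 'I_N}) : nat :=
  maxn (\rank (fspan f L)) (\rank (fspan f (~: L))).

Definition dF (f : 'I_N -> 'rV[R]_n) : nat :=
  \big[minn/n]_(L : {set 'I_N}) dLam f L.

(* orthogonal projection onto (the row space of) M: projection onto M
   along its orthogonal complement M^perp = kermx M^T *)
Definition oproj (M : 'M[R]_n) (v : 'rV[R]_n) : 'rV[R]_n :=
  v *m proj_mx <<M>>%MS (kermx M^T).

Definition PR_frame_for (M : 'M[R]_n) (g : 'I_N -> 'rV[R]_n) : Prop :=
  (fspan g setT == M)%MS /\
  forall x y : 'rV[R]_n, (x <= M)%MS -> (y <= M)%MS ->
    (forall i, `|dotv x (g i)| = `|dotv y (g i)|) -> x = y \/ x = - y.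

Definition is_FPR (f : 'I_N -> 'rV[R]_n) (M : 'M[R]_n) : Prop :=
  PR_frame_for M (fun i => oproj M (f i)).

Definition maximal_FPR (f : 'I_N -> 'rV[R]_n) (M : 'M[R]_n) : Prop :=
  is_FPR f M /\ forall M' : 'M[R]_n, is_FPR f M' -> ~~ (M < M')%MS.

End Defs.

(* If dim M exceeded d_L for an F-PR subspace M, then M would contain nonzero
   u orthogonal to f_L and v orthogonal to f_(~:L); the vectors u + v and u - v
   have the same phaseless measurements |<_, P_M f_i>| without being equal up
   to sign.  So every F-PR subspace has dimension at most d = d(F).
   Conversely, for each L one of span f_L, span f_(~:L) has dimension >= d, so
   its orthogonal complement K_L has dimension <= n - d.  Points of the moment
   curve t |-> (t^j)_j avoid any finite family of proper subspaces, which yields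
   a d-dimensional W meeting every K_L trivially.  Such a W is F-PR: if
   |<x, f_i>| = |<y, f_i>| for x, y in W, take L = [i | <x, f_i> = <y, f_i>];
   then x - y is orthogonal to f_L and x + y to f_(~:L), so one of them lies in
   W :&: K_L = 0.  Having the largest possible dimension, W is maximal. *)

From HB Require Import structures.
From mathcomp Require Import all_boot all_order all_algebra.
From mathcomp Require Import reals.
From mathcomp Require Import zify.
Import Order.TTheory GRing.Theory Num.Theory.
Local Open Scope ring_scope.
Set Implicit Arguments. Unset Strict Implicit. Unset Printing Implicit Defensive.

Lemma eqNv (R : numFieldType) (V : lmodType R) (v : V) : (- v == v) = (v == 0).
Proof.
apply/eqP/eqP => [Nv | ->]; last exact: oppr0.
have : 2%:R *: v = 0 by rewrite scaler_nat mulr2n -{1}Nv addNr.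
by move/eqP; rewrite scaler_eq0 pnatr_eq0 => /eqP.
Qed.

Lemma eq_addv_subv (R : numFieldType) (V : lmodType R) (u v : V) :
  (u + v == u - v) = (v == 0).
Proof. by rewrite (inj_eq (addrI u)) eq_sym eqNv. Qed.

Lemma exists_nonroot (R : numDomainType) (p : {poly R}) : p != 0 -> exists t, ~~ root p t.
Proof.
move=> p0; pose rs := [seq i%:R : R | i <- iota 0 (size p)].
have [rsP | /allPn [t _ ?]] := boolP (all (root p) rs); last by exists t.
have rs_uniq : uniq rs.
  by rewrite map_inj_uniq ?iota_uniq // => i j /eqP; rewrite eqr_nat => /eqP.
by have := max_poly_roots p0 rsP rs_uniq; rewrite size_map size_iota ltnn.
Qed.

Section GeneralPosition.
Variables (R : numFieldType) (n : nat).

Definition moment (t : R) : 'rV[R]_n := \row_(j < n) t ^+ j.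

Lemma horner_rVpoly (a : 'rV[R]_n) t : (rVpoly a).[t] = (moment t *m a^T) 0 0.
Proof.
rewrite (horner_coef_wide _ (size_poly _ _)) mxE.
by apply: eq_bigr => j _; rewrite coef_rVpoly_ord !mxE mulrC.
Qed.

Lemma rVpoly_eq0 (a : 'rV[R]_n) : (rVpoly a == 0) = (a == 0).
Proof.
apply/eqP/eqP => [a0 | ->]; last exact: linear0.
by rewrite -[a]rVpolyK a0 linear0.
Qed.

Lemma moment_notin_subspaces (s : seq 'M[R]_n) :
  {in s, forall U, \rank U < n}%N ->
  exists2 p : {poly R}, p != 0 &
    forall t, ~~ root p t -> {in s, forall U, ~~ (moment t <= U)%MS}.
Proof.
elim: s => [|U s IHs] s_proper; first by exists 1 => [|t _ U]; rewrite ?oner_eq0.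
have [|p p0 pP] := IHs; first by move=> V sV; apply: s_proper; rewrite inE sV orbT.
have : kermx U^T != 0.
  by rewrite -mxrank_eq0 mxrank_ker mxrank_tr subn_eq0 -ltnNge s_proper ?mem_head.
case/rowV0Pn => a /sub_kermxP aU a0; exists (rVpoly a * p) => [|t].
  by rewrite mulf_neq0 ?rVpoly_eq0.
rewrite rootM negb_or => /andP [at0 pt0] V; rewrite inE => /predU1P [-> | ]; last exact: pP.
apply: contra at0 => /submxP [D tU]; rewrite /root horner_rVpoly tU -mulmxA.
by rewrite -[U *m a^T]trmxK trmx_mul trmxK aU trmx0 mulmx0 mxE.
Qed.

Lemma exists_notin_subspaces (s : seq 'M[R]_n) :
  {in s, forall U, \rank U < n}%N ->
  exists v : 'rV[R]_n, {in s, forall U, ~~ (v <= U)%MS}.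
Proof.
move=> /moment_notin_subspaces [p /exists_nonroot [t pt] pP].
by exists (moment t); apply: pP.
Qed.

Lemma mxrank_adds_notin m (A : 'M[R]_(m, n)) (v : 'rV[R]_n) :
  ~~ (v <= A)%MS -> \rank (A + v)%MS = (\rank A).+1.
Proof.
move=> vA; have v0 : v != 0 by apply: contraNneq vA => ->; rewrite sub0mx.
apply/eqP; rewrite eqn_leq; apply/andP; split.
  by case: (mxrank_adds_leqif A v); rewrite rank_rV v0 addn1.
have : (A < A + v)%MS by rewrite ltmxE addsmxSl addsmx_sub negb_and vA orbT.
by rewrite ltmxErank => /andP [].
Qed.

Lemma general_position (s : seq 'M[R]_n) d :
  (d <= n)%N -> {in s, forall U, \rank U <= n - d}%N ->
  exists2 W : 'M[R]_n, \rank W = d & {in s, forall U, (W :&: U = 0)%MS}.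
Proof.
move=> dn s_small.
suff [W] : exists2 W : 'M[R]_n, \rank W = d & {in s, forall U, mxdirect (W + U)}.
  by move=> rW Wd; exists W => // U /Wd /mxdirect_addsP.
elim: d dn s_small => [|k IHk] kn s_small.
  by exists 0 => [|U _]; rewrite ?mxrank0 // mxdirectE /= mxrank0 add0n adds0mx.
have [|W rW Wd] := IHk (ltnW kn); first by move=> U /s_small; lia.
have rWU U : U \in s -> \rank (W + U)%MS = (k + \rank U)%N.
  by move=> /Wd; rewrite mxdirectE /= rW => /eqP.
have [|v vP] := exists_notin_subspaces (s := W :: [seq (W + U)%MS | U <- s]).
  move=> X; rewrite inE => /predU1P [-> | /mapP [U sU ->]]; first by rewrite rW.
  by rewrite rWU //; have := s_small U sU; lia.
have vW : ~~ (v <= W)%MS by apply: vP; rewrite mem_head.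
exists (W + v)%MS => [|U sU]; first by rewrite mxrank_adds_notin // rW.
have vWU : ~~ (v <= W + U)%MS by apply: vP; rewrite inE map_f ?orbT.
rewrite mxdirectE /= mxrank_adds_notin // rW -addsmxA (addsmxC v) addsmxA.
by rewrite mxrank_adds_notin // rWU.
Qed.

End GeneralPosition.

Section Orthogonality.
Variables (R : realType) (n : nat).
Implicit Types u v x y : 'rV[R]_n.

Definition orthmx m (A : 'M[R]_(m, n)) : 'M[R]_n := kermx A^T.

Lemma dotvC u v : dotv u v = dotv v u.
Proof. by rewrite /dotv -[u *m v^T]trmxK trmx_mul trmxK mxE. Qed.

Lemma dotvDl x y v : dotv (x + y) v = dotv x v + dotv y v.
Proof. by rewrite /dotv mulmxDl mxE. Qed.

Lemma dotvBl x y v : dotv (x - y) v = dotv x v - dotv y v.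
Proof. by rewrite /dotv mulmxBl !mxE. Qed.

Lemma dotvv_eq0 u : dotv u u = 0 -> u = 0.
Proof.
rewrite /dotv mxE; under eq_bigr do rewrite mxE -expr2.
move=> /psumr_eq0P u0; apply/rowP => j; rewrite mxE; apply/eqP.
by rewrite -sqrf_eq0 u0 // => i _; apply: sqr_ge0.
Qed.

Lemma dotv_orthmx m (A : 'M[R]_(m, n)) u v :
  (u <= orthmx A)%MS -> (v <= A)%MS -> dotv u v = 0.
Proof.
by move=> /sub_kermxP uA /submxP [D ->]; rewrite /dotv trmx_mul mulmxA uA mul0mx mxE.
Qed.

Lemma sub_orthmx_eq0 m (A : 'M[R]_(m, n)) u :
  (u <= A)%MS -> (u <= orthmx A)%MS -> u = 0.
Proof. by move=> uA uA'; apply: dotvv_eq0; apply: dotv_orthmx uA' uA. Qed.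

Lemma mxrank_orthmx m (A : 'M[R]_(m, n)) : \rank (orthmx A) = (n - \rank A)%N.
Proof. by rewrite mxrank_ker mxrank_tr. Qed.

Lemma capmx_orthmx_neq0 m1 m2 (A : 'M[R]_(m1, n)) (M : 'M[R]_(m2, n)) :
  (\rank A < \rank M)%N -> (M :&: orthmx A)%MS != 0.
Proof.
move=> AM; rewrite -mxrank_eq0; have := mxrank_sum_cap M (orthmx A).
rewrite mxrank_orthmx; have := rank_leq_col (M + orthmx A)%MS; have := rank_leq_col A.
lia.
Qed.

Lemma addsmx_orthmx_full (M : 'M[R]_n) : row_full (<<M>> + orthmx M)%MS.
Proof.
have cap0 : (<<M>> :&: orthmx M)%MS = 0.
  apply/eqP/rowV0P => u; rewrite sub_capmx genmxE => /andP [uM].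
  exact: sub_orthmx_eq0.
by rewrite /row_full mxrank_disjoint_sum // mxrank_orthmx genmxE subnKC ?rank_leq_col.
Qed.

Lemma oproj_sub (M : 'M[R]_n) v : (oproj M v <= M)%MS.
Proof. by apply: submx_trans (proj_mx_sub _ _ _) _; rewrite genmxE. Qed.

Lemma dotv_oproj (M : 'M[R]_n) x v : (x <= M)%MS -> dotv x (oproj M v) = dotv x v.
Proof.
move=> xM; have := proj_mx_compl_sub (submx_full v (addsmx_orthmx_full M)).
move=> /dotv_orthmx /(_ xM) /eqP; rewrite dotvBl subr_eq0 => /eqP vx.
by rewrite dotvC -vx dotvC.
Qed.

End Orthogonality.

Section PhaseRetrievableSubspaces.
Variables (R : realType) (n N : nat) (f : 'I_N -> 'rV[R]_n).
Implicit Types (L : {set 'I_N}) (M W : 'M[R]_n).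

Lemma sub_orthmx_fspanP L (z : 'rV[R]_n) :
  reflect (forall i, i \in L -> dotv z (f i) = 0) (z <= orthmx (fspan f L))%MS.
Proof.
apply: (iffP idP) => [zL i iL | zL].
  by apply: dotv_orthmx zL _; rewrite (sumsmx_sup i) ?genmxE.
apply/sub_kermxP; rewrite -[z]trmxK -trmx_mul; apply/eqP; rewrite trmx_eq0; apply/eqP.
apply/sub_kermxP/sumsmx_subP => i iL; rewrite genmxE; apply/sub_kermxP/rowP => j.
by rewrite (ord1 j) [RHS]mxE -/(dotv (f i) z) dotvC zL.
Qed.

Lemma dF_le_dLam L : (dF f <= dLam f L)%N.
Proof.
rewrite /dF; elim: (index_enum _) (mem_index_enum L) => // L' r IHr.
rewrite inE big_cons => /predU1P [<- | /IHr]; first exact: geq_minl.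
exact/leq_trans/geq_minr.
Qed.

Lemma dF_le_n : (dF f <= n)%N.
Proof. by apply: leq_trans (dF_le_dLam setT) _; rewrite geq_max !rank_leq_col. Qed.

Lemma leq_dF k : (k <= n)%N -> (forall L, k <= dLam f L)%N -> (k <= dF f)%N.
Proof.
by move=> kn kL; apply: (big_ind (fun m => k <= m)%N) => // a b; rewrite leq_min => ->.
Qed.

Lemma mxrank_FPR_le_dLam M L : is_FPR f M -> (\rank M <= dLam f L)%N.
Proof.
case=> _ PR; rewrite leqNgt gtn_max; apply/negP => /andP [LM LcM].
have /rowV0Pn [u] := capmx_orthmx_neq0 LM; rewrite sub_capmx => /andP [uM uL] u0.
have /rowV0Pn [v] := capmx_orthmx_neq0 LcM; rewrite sub_capmx => /andP [vM vLc] v0.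
have uvM : ((u + v)%R <= M)%MS by apply: addmx_sub.
have uvM' : ((u - v)%R <= M)%MS by apply: addmx_sub; rewrite ?eqmx_opp.
have [i|/eqP|/eqP] := PR _ _ uvM uvM'.
- rewrite !dotv_oproj // dotvDl dotvBl.
  have [iL | iLc] := boolP (i \in L).
    by rewrite (sub_orthmx_fspanP _ _ uL) // add0r sub0r normrN.
  by rewrite (sub_orthmx_fspanP _ _ vLc) ?addr0 ?subr0 ?inE.
- by rewrite eq_addv_subv (negPf v0).
- by rewrite opprB addrC eq_addv_subv (negPf u0).
Qed.

Lemma mxrank_FPR_le_dF M : is_FPR f M -> (\rank M <= dF f)%N.
Proof.
by move=> FPR_M; apply: leq_dF (rank_leq_col M) _ => L; apply: mxrank_FPR_le_dLam.
Qed.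

(* W meets the orthogonal complement of span f_S trivially iff the projections
   P_W f_i, i in S, span W: this is the complement property of {P_W f_i}. *)
Definition complement_property W := forall L,
  (W :&: orthmx (fspan f L) = 0)%MS \/ (W :&: orthmx (fspan f (~: L)) = 0)%MS.

Lemma is_FPR_of_complement_property W : complement_property W -> is_FPR f W.
Proof.
move=> cpW.
have sep L (z1 z2 : 'rV[R]_n) : (z1 <= W)%MS -> (z2 <= W)%MS ->
    (forall i, i \in L -> dotv z1 (f i) = 0) ->
    (forall i, i \notin L -> dotv z2 (f i) = 0) ->
  z1 = 0 \/ z2 = 0.
  move=> z1W z2W z1L z2Lc; have [] := cpW L => /eqP/rowV0P cap0; [left | right];
    apply: cap0; rewrite sub_capmx ?z1W ?z2W; apply/sub_orthmx_fspanP => // i.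
  by rewrite inE; apply: z2Lc.
split.
  have GW : (fspan (fun i => oproj W (f i)) setT <= W)%MS.
    by apply/sumsmx_subP => i _; rewrite genmxE oproj_sub.
  rewrite GW -(mxrank_leqif_sup GW).2 eqn_leq (mxrankS GW) /= leqNgt.
  apply/negP => /capmx_orthmx_neq0 /rowV0Pn [u]; rewrite sub_capmx => /andP [uW uG].
  have uf i : dotv u (f i) = 0.
    rewrite -(dotv_oproj _ uW); apply: dotv_orthmx uG _.
    by rewrite (sumsmx_sup i) ?genmxE.
  have [] := sep set0 u u uW uW (fun i _ => uf i) (fun i _ => uf i);
    by move=> ->; rewrite eqxx.
move=> x y xW yW xy; pose L := [set i | dotv x (f i) == dotv y (f i)].
have xyW : ((x - y)%R <= W)%MS by apply: addmx_sub; rewrite ?eqmx_opp.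
have xyW' : ((x + y)%R <= W)%MS by apply: addmx_sub.
have [||/eqP|/eqP] := sep L (x - y) (x + y) xyW xyW'.
- by move=> i; rewrite inE dotvBl => /eqP ->; rewrite subrr.
- move=> i; rewrite inE dotvDl => xyi; apply/eqP; rewrite addr_eq0.
  move: (xy i); rewrite !dotv_oproj // => /eqP; rewrite eqr_norm2.
  by rewrite (negPf xyi).
- by rewrite subr_eq0 => /eqP; left.
- by rewrite addr_eq0 => /eqP; right.
Qed.

Lemma exists_FPR_mxrank_dF : exists2 W : 'M[R]_n, is_FPR f W & \rank W = dF f.
Proof.
pose side L := if (dF f <= \rank (fspan f L))%N then L else ~: L.
have side_rank L : (dF f <= \rank (fspan f (side L)))%N.
  rewrite /side; case: ifPn => // /negPf dL; have := dF_le_dLam L.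
  by rewrite /dLam leq_max dL.
pose s := [seq orthmx (fspan f (side L)) | L <- enum {set 'I_N}].
have [|W rW Ws] := general_position (s := s) dF_le_n.
  by move=> _ /mapP [L _ ->]; rewrite mxrank_orthmx leq_sub2l.
exists W => //; apply: is_FPR_of_complement_property => L.
have := Ws _ (map_f (fun L => orthmx (fspan f (side L))) (mem_enum _ L)).
by rewrite /side; case: ifP => _; [left | right].
Qed.

End PhaseRetrievableSubspaces.

Unset Implicit Arguments.

Theorem theorem3p2 (R : realType) (n N : nat) (f : 'I_N -> 'rV[R]_n) :
  is_frame f ->
  (exists M : 'M[R]_n, maximal_FPR f M /\ \rank M = dF f) /\
  (forall M : 'M[R]_n, maximal_FPR f M -> (\rank M <= dF f)%N).
Proof.
(* Neither bound uses that f spans R^n. *)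
move=> _; split; last by move=> M [FPR_M _]; apply: mxrank_FPR_le_dF.
have [M FPR_M rM] := exists_FPR_mxrank_dF f.
exists M; split => //; split => // M' /mxrank_FPR_le_dF; rewrite -rM => rM'.
by rewrite ltmxErank ltnNge rM' andbF.
Qed.
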